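(* Let $G$ be a finite group and $H\leq G$. If $x\in G$ and $y\in S_x$, then $H_y=H_x$ and consequently $S_y=S_x$. As a result, for any $x,y\in G$ either $S_x=S_y$ or $S_x\cap S_y=\varnothing$.
   Context: For $x\in G$, $H_x=\bigcap_{i\in\mathbb{Z}}x^iHx^{-i}$ (the largest subgroup of $H$ normalized by $x$) and $S_x=H_x\cdot x\subseteq G$. *)

From mathcomp Require Import all_boot all_fingroup.
From mathcomp Require Import ssrint.
From mathcomp Require Import boolp.
Set Implicit Arguments. Unset Strict Implicit. Unset Printing Implicit Defensive.
Local Open Scope group_scope.

Definition gpowz (gT : finGroupType) (x : gT) (i : int) : gT :=
  match i with
  | Posz n => x ^+ n
  | Negz n => x ^- n.+1
  end.

Definition conjpow (gT : finGroupType) (H : {set gT}) (x : gT) (i : int) : {set gT} :=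
  [set gpowz x i * k * (gpowz x i)^-1 | k in H].

Definition Hx (gT : finGroupType) (H : {set gT}) (x : gT) : {set gT} :=
  [set h : gT | `[< forall i : int, h \in conjpow H x i >]].

Definition Sx (gT : finGroupType) (H : {set gT}) (x : gT) : {set gT} :=
  Hx H x :* x.

(* H_x is the core of H in the cyclic group <[x]>.  If h lies in that core,
   then h * x still normalises it, so the core of H in <[h * x]> contains it;
   since x = h^-1 * (h * x) the argument runs backwards as well, and the two
   cores agree.  Hence S_y = S_x for y in S_x, and the sets S_x, being
   rcosets of their own H_x containing x, partition the group. *)
From mathcomp Require Import all_boot all_fingroup.
From mathcomp Require Import ssrint boolp.
Set Implicit Arguments. Unset Strict Implicit. Unset Printing Implicit Defensive.
Local Open Scope group_scope.

Lemma conjpowE (gT : finGroupType) (H : {set gT}) (x : gT) (i : int) :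
  conjpow H x i = H :^ (gpowz x i)^-1.
Proof.
rewrite /conjpow /conjugate; apply: eq_imset => k.
by rewrite /conjg invgK mulgA.
Qed.

Lemma Hx_gcore (gT : finGroupType) (H : {set gT}) (x : gT) :
  Hx H x = gcore H <[x]>.
Proof.
apply/setP => h; rewrite /Hx inE; apply/asboolP/bigcapP => [hH g | hH i].
- case/cycleP => -[|m] ->.
  + by have := hH 0%Z; rewrite conjpowE /= invg1 expg0.
  + by have := hH (Negz m); rewrite conjpowE /= invgK.
- rewrite conjpowE; apply: hH.
  by case: i => n /=; rewrite ?groupV groupX // cycle_id.
Qed.

Section CoreInCycle.

Variables (gT : finGroupType) (H : {group gT}).

Lemma gcore_cycle_sub_mulg (a b : gT) :
  b \in gcore H <[a]> -> gcore H <[a]> \subset gcore H <[b * a]>.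
Proof.
move=> bC; apply: gcore_max; first exact: gcore_sub.
rewrite cycle_subG groupM //; first exact: subsetP (normG _) b bC.
by rewrite -cycle_subG gcore_norm.
Qed.

Lemma gcore_cycle_mulg (x h : gT) :
  h \in gcore H <[x]> -> gcore H <[h * x]> = gcore H <[x]>.
Proof.
move=> hC; have sub_hx := gcore_cycle_sub_mulg hC.
apply/eqP; rewrite eqEsubset sub_hx andbT.
rewrite -{2}(mulKg h x); apply: gcore_cycle_sub_mulg.
by rewrite (subsetP sub_hx) ?groupV.
Qed.

Lemma Hx_mem_Sx (x y : gT) : y \in Sx H x -> Hx H y = Hx H x.
Proof. by rewrite /Sx !Hx_gcore => /rcosetP [h hC ->]; apply: gcore_cycle_mulg. Qed.

Lemma Sx_mem_Sx (x y : gT) : y \in Sx H x -> Sx H y = Sx H x.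
Proof.
move=> yS; rewrite {1}/Sx (Hx_mem_Sx yS).
by move: yS; rewrite /Sx Hx_gcore => /rcosetP [h hC ->]; rewrite rcosetM rcoset_id.
Qed.

Lemma Sx_eq_or_disjoint (x y : gT) :
  Sx H x = Sx H y \/ Sx H x :&: Sx H y = set0.
Proof.
have [->|[z]] := set_0Vmem (Sx H x :&: Sx H y); first by right.
by rewrite inE => /andP [zx zy]; left; rewrite -(Sx_mem_Sx zx) (Sx_mem_Sx zy).
Qed.

End CoreInCycle.

Theorem lemma4p2 (gT : finGroupType) (G H : {group gT}) :
  H \subset G ->
  (forall x y, x \in G -> y \in Sx H x -> Hx H y = Hx H x /\ Sx H y = Sx H x) /\
  (forall x y, x \in G -> y \in G -> Sx H x = Sx H y \/ Sx H x :&: Sx H y = set0).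
Proof.
move=> _; split => x y _ => [yS | _]; last exact: Sx_eq_or_disjoint.
by split; [apply: Hx_mem_Sx | apply: Sx_mem_Sx].
Qed.
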